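(* For any integers $s,k\geq 2$, we have $\chi(\overline{K}(sk,k))\leq h_o(\overline{K}(sk,k))$, and $\overline{K}(sk,k)$ contains a strongly $1$-shallow $K_t$-minor with $t=\chi(\overline{K}(sk,k))$.
   Context: For integers $n\ge 2k\ge 4$, $\overline{K}(n,k)$ is the complement of the Kneser graph: its vertices are the $k$-element subsets of $[n]=\{1,\dots,n\}$, two distinct ones adjacent iff they intersect. $\chi$ is chromatic number. A $K_t$-minor of a graph $G$ is given by $t$ pairwise vertex-disjoint connected subgraphs (bags), any two joined by an edge of $G$. A star is $K_{1,s}$, $s\ge1$. A $K_t$-minor is strongly $1$-shallow if each bag is a single vertex or a star, and every two bags are joined by an edge each of whose endpoints is either the unique vertex of a single-vertex bag or a leaf of a star bag. Signed graphs: $(G,\sigma)$ with $\sigma:E(G)\to\{+,-\}$; switching at $x$ flips signs of edges at $x$. $(H,\pi)$ is a minor of $(G,\sigma)$ if for some $\tau$ switching equivalent to $\sigma$ there are disjoint subgraphs $B_x$ ($x\in V(H)$) whose $\tau$-positive edges span each $B_x$ connectedly, and for each edge $xy$ of $H$ an edge $uv$ with $u\in B_x,v\in B_y$ and $\tau(uv)=\pi(xy)$. $h_o(G)$ is the largest $t$ such that $(K_t,-)$ (all edges negative) is a minor of $(G,-)$. *)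

From mathcomp Require Import all_boot.
Set Implicit Arguments. Unset Strict Implicit. Unset Printing Implicit Defensive.

(* A (simple) graph is a relation [e : rel T] on a finite type [T];
   [e x y] means that x and y are adjacent.  Loops are ignored. *)

Definition colorable (T : finType) (e : rel T) (c : nat) : bool :=
  [exists f : {ffun T -> 'I_c},
     [forall x, [forall y, ((x != y) && e x y) ==> (f x != f y)]]].

Lemma colorable_card (T : finType) (e : rel T) : exists c, colorable e c.
Proof.
exists #|T|; apply/existsP; exists [ffun x => enum_rank x].
apply/forallP => x; apply/forallP => y; apply/implyP => /andP[nxy _].
by rewrite !ffunE (inj_eq enum_rank_inj).
Qed.

Definition chi (T : finType) (e : rel T) : nat := ex_minn (colorable_card e).

Definition connected_in (T : finType) (r : rel T) (B : {set T}) : Prop :=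
  B != set0 /\
  forall u v, u \in B -> v \in B ->
    connect [rel a b | [&& a \in B, b \in B & r a b]] u v.

(* A signature switching equivalent to the all-negative one is obtained by
   switching at a set X of vertices: an edge uv is then positive iff exactly
   one of u, v lies in X, and negative iff u, v lie on the same side of X.
   (K_t,-) is a minor of (G,-) iff for some such X there are pairwise
   disjoint bags B_i (i < t), each connected by its positive edges, and for
   i <> j a negative edge between B_i and B_j.  (A bag subgraph is
   connected via its positive edges iff the subgraph induced on its vertex
   set is, so bags are given by their vertex sets.) *)
Definition odd_Kminor (T : finType) (e : rel T) (t : nat) : Prop :=
  exists (X : {set T}) (B : 'I_t -> {set T}),
    (forall i j, i != j -> [disjoint B i & B j]) /\
    (forall i, connected_in [rel u v | e u v && ((u \in X) != (v \in X))] (B i)) /\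
    (forall i j, i != j -> exists u v,
        [/\ u \in B i, v \in B j, e u v & (u \in X) = (v \in X)]).

Definition is_odd_hadwiger (T : finType) (e : rel T) (h : nat) : Prop :=
  odd_Kminor e h /\ forall t, odd_Kminor e t -> t <= h.

(* Bag i is given by a vertex r i and a set L i of leaves.  If L i is empty
   the bag is the single vertex r i; otherwise it is the star with centre
   r i and leaves L i (r i not in L i, r i adjacent to every leaf). *)
Definition bag_vertices (T : finType) (r : T) (L : {set T}) : {set T} :=
  r |: L.
Definition bag_attach (T : finType) (r : T) (L : {set T}) : {set T} :=
  if L == set0 then [set r] else L.

Definition strongly_1shallow_Kminor (T : finType) (e : rel T) (t : nat) : Prop :=
  exists (r : 'I_t -> T) (L : 'I_t -> {set T}),
    (forall i, r i \notin L i /\ forall l, l \in L i -> e (r i) l) /\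
    (forall i j, i != j -> [disjoint bag_vertices (r i) (L i) & bag_vertices (r j) (L j)]) /\
    (forall i j, i != j -> exists u v,
        [/\ u \in bag_attach (r i) (L i), v \in bag_attach (r j) (L j) & e u v]).

Definition kset (n k : nat) := {A : {set 'I_n} | #|A| == k}.

Definition Kbar (n k : nat) : rel (kset n k) :=
  fun A B => (val A != val B) && (val A :&: val B != set0).
Arguments Kbar n k : clear implicits.

From Stdlib Require Import Classical.
From mathcomp Require Import all_boot zify.
Set Implicit Arguments. Unset Strict Implicit. Unset Printing Implicit Defensive.

(* A proper colouring of the complement of the Kneser graph K(sk, k) is a
   partition of the k-subsets of [sk] into matchings.  Baranyai's theorem
   splits them into C(sk - 1, k - 1) perfect matchings, so chi is at most
   C(sk - 1, k - 1); picking in each perfect matching the block through a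
   fixed point gives that many pairwise intersecting k-sets, i.e. a clique.
   A clique of size t is at once an odd K_t-minor (single-vertex bags, no
   switching) and a strongly 1-shallow K_t-minor.
   Baranyai's theorem is proved by adding the points 0, 1, ... one at a
   time to C(sk - 1, k - 1) rows of s disjoint parts, keeping the parts
   distributed like the traces of a resolution; each step is an integral
   rounding, given by Hall's theorem with capacities, of an obvious
   fractional solution. *)

Lemma sum_sub_indicator (C : finType) (A : {pred C}) (d : C -> nat) c1 :
  \sum_(c in A) d c <= \sum_(c in A) (d c - (c == c1)) + 1.
Proof.
have one : \sum_(c in A) (c == c1) <= 1.
  rewrite big_mkcond /= (bigD1 c1) //= eqxx big1 ?addn0; first by case: (c1 \in A).
  by move=> c /negbTE ->; case: (c \in A).
apply: leq_trans (leq_add (leqnn _) one); rewrite -big_split /=.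
by apply: leq_sum => c _; lia.
Qed.

Lemma sum_by_fibers (I J : finType) (A : pred I) (F : I -> J) (f : J -> nat) :
  \sum_(i | A i) f (F i) = \sum_j #|[set i | A i & F i == j]| * f j.
Proof.
rewrite (partition_big F xpredT) //=; apply: eq_bigr => j _.
rewrite (eq_bigr (fun _ => f j)); last by move=> i /andP[_ /eqP ->].
by rewrite sum_nat_const; congr (_ * _); apply: eq_card => i; rewrite !inE.
Qed.

Lemma card_graph_set (I J : finType) (f : I -> J) (Q : {pred I}) :
  #|[set p : I * J | (p.2 == f p.1) && (p.1 \in Q)]| = #|[set i in Q]|.
Proof.
rewrite -(card_imset _ (f := fun i => (i, f i))); last by move=> x y [].
apply: eq_card => -[i j]; rewrite inE /=; apply/andP/imsetP.
  by case=> /eqP -> Qi; exists i; rewrite ?inE.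
by case=> x; rewrite inE => Qx [-> ->].
Qed.

Lemma disjoint_setU1 (T : finType) (x : T) (A B : {set T}) :
  [disjoint x |: A & B] = (x \notin B) && [disjoint A & B].
Proof. by rewrite -disjointU1; apply: eq_disjoint => y; rewrite !inE. Qed.

Lemma disjoint_family_cover (I T : finType) (A : I -> {set T}) :
  (forall i i', i != i' -> [disjoint A i & A i']) -> \sum_i #|A i| = #|T| ->
  forall x, exists i, x \in A i.
Proof.
move=> disA sumA x.
have cardU : #|\bigcup_i A i| = \sum_i #|A i|.
  rewrite -sum1_card partition_disjoint_bigcup //.
  by apply: eq_bigr => i _; rewrite sum1_card.
have : x \in \bigcup_i A i.
  suff -> : \bigcup_i A i = setT by [].
  by apply/eqP; rewrite eqEcard subsetT cardU sumA cardsT leqnn.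
by case/bigcupP => i _; exists i.
Qed.

Lemma ex_max_bounded (P : nat -> Prop) N a : P a -> (forall t, P t -> t <= N) ->
  exists h, P h /\ forall t, P t -> t <= h.
Proof.
elim: N a => [|N IH] a Pa bnd.
  by exists a; split=> // t Pt; have := bnd t Pt; have := bnd a Pa; lia.
case: (classic (P N.+1)) => [PN|nPN]; first by exists N.+1.
apply: (IH a Pa) => t Pt; have := bnd t Pt; rewrite leq_eqVlt => /orP[/eqP e|//].
by rewrite e in Pt.
Qed.

Section CapacitatedHall.
Variables (R C : finType) (E : R -> C -> bool) (c0 : C).

Definition nbhd (W : {set R}) : {set C} := [set c | [exists r in W, E r c]].

Definition hall_cond (Z : {set R}) (d : C -> nat) : Prop :=
  forall W : {set R}, W \subset Z -> #|W| <= \sum_(c in nbhd W) d c.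

Definition has_assignment (Z : {set R}) (d : C -> nat) : Prop :=
  exists g : R -> C, (forall r, r \in Z -> E r (g r)) /\
    forall c, #|[set r in Z | g r == c]| <= d c.

Lemma nbhdU W V : nbhd (W :|: V) = nbhd W :|: nbhd V.
Proof.
apply/setP=> c; rewrite !inE; apply/existsP/orP.
  case=> r /andP[]; rewrite inE => /orP[] rW Erc; [left|right];
  by apply/existsP; exists r; rewrite rW.
by case=> /existsP[r /andP[rW Erc]]; exists r; rewrite inE rW ?orbT.
Qed.

Lemma hall_cond_sub (Z V : {set R}) d : V \subset Z -> hall_cond Z d -> hall_cond V d.
Proof. by move=> VZ HZ W WV; apply: HZ (subset_trans WV VZ). Qed.

Lemma has_assignment0 d : has_assignment set0 d.
Proof.
exists (fun _ => c0); split=> [r|c]; first by rewrite inE.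
by rewrite (_ : [set _ in _ | _] = set0) ?cards0 //; apply/setP => r; rewrite !inE.
Qed.

Section TightSet.
Variables (Z W : {set R}) (d : C -> nat).
Hypotheses (WZ : W \subset Z) (W_tight : #|W| = \sum_(c in nbhd W) d c).

Definition cap_outside c := if c \in nbhd W then 0 else d c.

Lemma hall_cond_tight : hall_cond Z d -> hall_cond (Z :\: W) cap_outside.
Proof.
move=> HZ V VZW.
have /andP[VZ VW] : (V \subset Z) && [disjoint V & W] by rewrite -subsetD.
have VWZ : V :|: W \subset Z by rewrite subUset VZ WZ.
have := HZ _ VWZ; rewrite nbhdU.
have -> : #|V :|: W| = #|V| + #|W| by apply/eqP; rewrite (leq_card_setU V W).2.
have -> : \sum_(c in nbhd V :|: nbhd W) d c =
          \sum_(c in nbhd W) d c + \sum_(c in nbhd V) cap_outside c.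
  rewrite big_mkcond [\sum_(c in nbhd W) _]big_mkcond.
  rewrite [\sum_(c in nbhd V) _]big_mkcond -big_split /=.
  apply: eq_bigr => c _; rewrite /cap_outside in_setU.
  by case: (c \in nbhd V); case: (c \in nbhd W); rewrite ?addn0.
by rewrite -W_tight [X in X <= _]addnC leq_add2l.
Qed.

Lemma has_assignment_tight :
  has_assignment W d -> has_assignment (Z :\: W) cap_outside -> has_assignment Z d.
Proof.
move=> [g1 [g1E g1c]] [g2 [g2E g2c]].
exists (fun r => if r \in W then g1 r else g2 r); split.
  by move=> r rZ; case: ifP => rW; [apply: g1E | apply: g2E; rewrite inE rW rZ].
move=> c; have -> : [set r in Z | (if r \in W then g1 r else g2 r) == c] =
    [set r in W | g1 r == c] :|: [set r in Z :\: W | g2 r == c].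
  apply/setP=> r; rewrite !inE; case: (boolP (r \in W)) => rW //=.
  by rewrite orbF (subsetP WZ r rW).
apply: leq_trans (leq_card_setU _ _).1 _.
have := g2c c; rewrite /cap_outside; case: (boolP (c \in nbhd W)) => cW.
  by rewrite leqn0 => /eqP ->; rewrite addn0 g1c.
have -> : [set r in W | g1 r == c] = set0.
  apply/setP=> r; rewrite !inE; apply/andP=> -[rW /eqP gc]; move: cW; rewrite inE.
  by case/existsP; exists r; rewrite rW -gc g1E.
by rewrite cards0.
Qed.

End TightSet.

Section SlackSets.
Variables (Z : {set R}) (d : C -> nat) (r0 : R) (c1 : C).
Hypothesis r0Z : r0 \in Z.

Definition cap_minus c := d c - (c == c1).

Lemma hall_cond_slack :
  hall_cond Z d ->
  (forall V : {set R}, V \subset Z -> V != set0 -> V != Z -> #|V| < \sum_(c in nbhd V) d c) ->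
  hall_cond (Z :\ r0) cap_minus.
Proof.
move=> HZ slack V VZ; case: (eqVneq V set0) => [->|V0]; first by rewrite cards0.
have VZ' : V \subset Z by apply: subset_trans VZ (subsetDl _ _).
have VnZ : V != Z by apply: contraTneq VZ => ->; apply/subsetPn; exists r0; rewrite ?inE ?eqxx.
have := slack V VZ' V0 VnZ; have := sum_sub_indicator (nbhd V) d c1.
rewrite /cap_minus; lia.
Qed.

Lemma has_assignment_add :
  E r0 c1 -> 0 < d c1 -> has_assignment (Z :\ r0) cap_minus -> has_assignment Z d.
Proof.
move=> Er0c1 dc1 [g [gE gc]]; exists (fun r => if r == r0 then c1 else g r); split.
  by move=> r rZ; case: eqP => [->|/eqP rr0] //; apply: gE; rewrite !inE rr0.
move=> c; have := gc c; rewrite /cap_minus.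
have -> : [set r in Z | (if r == r0 then c1 else g r) == c] =
    (if c1 == c then [set r0] else set0) :|: [set r in Z :\ r0 | g r == c].
  apply/setP=> r; rewrite !inE; case: (eqVneq r r0) => [->|rr0] /=.
    by rewrite r0Z orbF; case: eqP; rewrite ?inE ?eqxx.
  by case: (c1 == c); rewrite ?inE ?(negbTE rr0).
move=> h; apply: leq_trans (leq_card_setU _ _).1 _.
case: (eqVneq c1 c) h => [<-|_]; first by rewrite cards1; lia.
by rewrite subn0 cards0.
Qed.

End SlackSets.

(* Halmos--Vaughan: split Z along a tight nonempty proper subset if there is
   one; otherwise every such subset has slack, and any r0 can be sent to a
   neighbour of positive capacity. *)
Theorem capacitated_hall (Z : {set R}) d : hall_cond Z d -> has_assignment Z d.
Proof.
have [N] := ubnP #|Z|; elim: N Z d => // N IH Z d ltZN HZ.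
case: (boolP [exists W : {set R}, [&& W \subset Z, W != set0, W != Z &
                                   #|W| == \sum_(c in nbhd W) d c]]).
  case/existsP => W /and4P[WZ W0 WnZ /eqP tight].
  have ltW : #|W| < #|Z| by apply: proper_card; rewrite properEneq WnZ WZ.
  apply: (has_assignment_tight WZ).
    by apply: IH (leq_trans ltW _) (hall_cond_sub WZ HZ); rewrite -ltnS.
  apply: IH (hall_cond_tight WZ tight HZ).
  by rewrite cardsDS //; move: ltZN; rewrite -card_gt0 in W0; lia.
move=> /existsPn no_tight.
case: (set_0Vmem Z) => [->|[r0 r0Z]]; first exact: has_assignment0.
have : \sum_(c in nbhd [set r0]) d c != 0.
  by rewrite -lt0n; have := HZ [set r0]; rewrite sub1set cards1; apply.
rewrite sum_nat_eq0 => /forall_inPn[c1 c1N dc1]; rewrite -lt0n in dc1.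
have Er0c1 : E r0 c1 by move: c1N; rewrite inE => /exists_inP[r /set1P ->].
have slack (V : {set R}) :
    V \subset Z -> V != set0 -> V != Z -> #|V| < \sum_(c in nbhd V) d c.
  move=> VZ V0 VnZ; rewrite ltn_neqAle HZ // andbT.
  by have := no_tight V; rewrite VZ V0 VnZ.
have ltZr0 : #|Z :\ r0| < N by move: ltZN; rewrite (cardsD1 r0 Z) r0Z.
have HZr0 : hall_cond (Z :\ r0) (cap_minus d c1) :=
  @hall_cond_slack _ _ _ _ r0Z HZ slack.
exact: has_assignment_add r0Z Er0c1 dc1 (IH _ _ ltZr0 HZr0).
Qed.

End CapacitatedHall.

Section Baranyai.
Variables n k M s : nat.

Definition below m : {set 'I_n} := [set x : 'I_n | x < m].

Definition mult (P : 'I_M -> 'I_s -> {set 'I_n}) (S : {set 'I_n}) :=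
  #|[set p : 'I_M * 'I_s | P p.1 p.2 == S]|.

(* The number of k-subsets of [0, n) whose trace on [0, m) is S, i.e. the
   multiplicity of S among the traces on [0, m) of the blocks of a resolution. *)
Definition target m (S : {set 'I_n}) :=
  if (S \subset below m) && (#|S| <= k) then 'C(n - m, k - #|S|) else 0.

Definition baranyai_inv m (P : 'I_M -> 'I_s -> {set 'I_n}) :=
  [/\ forall j i i', i != i' -> [disjoint P j i & P j i'],
      forall j, \sum_i #|P j i| = m
    & forall S, mult P S = target m S].

(* How many parts equal to S must receive the point m. *)
Definition demand m (S : {set 'I_n}) :=
  if (S \subset below m) && (#|S| < k) then 'C(n - m.+1, k - #|S|.+1) else 0.

Lemma baranyai_inv_part m P : baranyai_inv m P -> forall j i,
  [/\ P j i \subset below m, #|P j i| <= k & k - #|P j i| <= n - m].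
Proof.
case=> _ _ multP j i; have : 0 < mult P (P j i).
  by rewrite card_gt0; apply/set0Pn; exists (j, i); rewrite inE.
by rewrite multP /target; case: andP => // -[-> ->]; rewrite bin_gt0.
Qed.

Lemma baranyai_inv0 : M * s = 'C(n, k) -> baranyai_inv 0 (fun _ _ => set0).
Proof.
move=> Ms; split=> [j i i' _|j|S]; first by rewrite -setI_eq0 setI0.
  by rewrite big1 // => i _; rewrite cards0.
rewrite /mult /target; case: (eqVneq S set0) => [->|nS].
  rewrite sub0set cards0 !subn0 -Ms.
  rewrite (_ : [set _ | _] = setT) ?cardsT ?card_prod ?card_ord //.
have -> : S \subset below 0 = false.
  by case/set0Pn: nS => x xS; apply/negbTE/subsetPn; exists x; rewrite // inE.
by rewrite (_ : [set _ | _] = set0) ?cards0 //; apply/setP => p; rewrite !inE.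
Qed.

Lemma target_deficit m S : target m S * (k - #|S|) = (n - m) * demand m S.
Proof.
rewrite /target /demand; case: (S \subset below m); rewrite ?mul0n ?muln0 //=.
case: (ltngtP #|S| k) => [lt|gt|->]; rewrite ?mul0n ?subnn ?muln0 //.
by rewrite -(subnSK lt) [n - m.+1]subnS mul_bin_diag mulnC.
Qed.

Section Succ.
Variables (m : nat) (ltmn : m < n).
Local Notation om := (Ordinal ltmn).

Lemma below_succ_notin (T : {set 'I_n}) :
  om \notin T -> (T \subset below m.+1) = (T \subset below m).
Proof.
move=> omT; apply/subsetP/subsetP => sub x xT; have := sub x xT; rewrite !inE; last by lia.
have : (x : nat) != m by apply: contraNneq omT => xm; rewrite (_ : om = x) //; apply: val_inj.
lia.
Qed.

Lemma target_succ_notin (T : {set 'I_n}) :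
  om \notin T -> target m T = target m.+1 T + demand m T.
Proof.
move=> omT; rewrite /target /demand (below_succ_notin omT); case: (T \subset below m) => //=.
case: (ltngtP #|T| k) => [lt|//|->]; last by rewrite subnn !bin0 addn0.
by rewrite -(subnSK lt) -(subnSK ltmn) binS.
Qed.

Lemma target_succ_in (T : {set 'I_n}) : om \in T -> target m.+1 T = demand m (T :\ om).
Proof.
move=> omT; have omT' : om \notin T :\ om by rewrite in_setD1 eqxx.
rewrite /target /demand -(below_succ_notin omT') (cardsD1 om T) omT add1n.
by rewrite -{1}(setD1K omT) subUset sub1set inE /= ltnSn.
Qed.

End Succ.

Section Step.
Variables (m : nat) (P : 'I_M -> 'I_s -> {set 'I_n}).
Hypotheses (n_eq : n = s * k) (ltmn : m < n) (IP : baranyai_inv m P).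
Local Notation om := (Ordinal ltmn).

Lemma row_deficit j : \sum_i (k - #|P j i|) = n - m.
Proof.
have [_ rowP _] := IP; have part := baranyai_inv_part IP j.
have : \sum_i (k - #|P j i|) + \sum_i #|P j i| = s * k.
  rewrite -big_split /= (eq_bigr (fun _ => k)) ?sum_nat_const ?card_ord //.
  by move=> i _; rewrite subnK //; case: (part i).
by rewrite rowP -n_eq; lia.
Qed.

(* Weighting the part P j i of row j by (k - #|P j i|) / (n - m) gives a
   fractional choice of one part per row that meets the demands exactly. *)
Lemma deficit_by_parts (W : {set 'I_M}) : (n - m) * #|W| =
  \sum_S #|[set p : 'I_M * 'I_s | (p.1 \in W) && (P p.1 p.2 == S)]| * (k - #|S|).
Proof.
have -> : (n - m) * #|W| = \sum_(j in W) \sum_i (k - #|P j i|).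
  by rewrite (eq_bigr _ (fun j _ => row_deficit j)) sum_nat_const mulnC.
rewrite pair_big_dep (sum_by_fibers _ (fun p => P p.1 p.2) (fun S => k - #|S|)).
by apply: eq_bigr => S _; congr (_ * _); apply: eq_card => p; rewrite !inE andbT.
Qed.

Lemma sum_demand : \sum_S demand m S = M.
Proof.
have [_ _ multP] := IP; apply/eqP; rewrite -(eqn_pmul2l (_ : 0 < n - m)) ?subn_gt0 //.
rewrite big_distrr -[M in _ * M]card_ord -cardsT deficit_by_parts /=.
apply/eqP/eq_bigr => S _; rewrite -target_deficit -multP; congr (_ * _).
by apply: eq_card => p; rewrite !inE.
Qed.

Definition row_contains j S := [exists i, P j i == S].

Lemma hall_cond_demand : hall_cond row_contains setT (demand m).
Proof.
have [_ _ multP] := IP; move=> W _.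
rewrite -(leq_pmul2l (_ : 0 < n - m)) ?subn_gt0 // deficit_by_parts big_distrr /=.
rewrite [X in _ <= X]big_mkcond /=; apply: leq_sum => S _.
rewrite -target_deficit -multP; case: ifP => SW.
  rewrite leq_mul2r subset_leq_card ?orbT //.
  by apply/subsetP => p; rewrite !inE => /andP[].
rewrite (_ : [set _ | _] = set0) ?cards0 //; apply/setP => -[j i]; rewrite !inE /=.
apply: contraFF SW => /andP[jW /eqP PS]; rewrite inE.
by apply/exists_inP; exists j => //; apply/existsP; exists i; rewrite PS.
Qed.

Lemma om_notin_part j i : om \notin P j i.
Proof.
have [/subsetP sub _ _] := baranyai_inv_part IP j i.
by apply/negP => /sub; rewrite inE ltnn.
Qed.

Section Extend.
Variable sel : 'I_M -> 'I_s.
Hypothesis sel_demand :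
  forall S : {set 'I_n}, #|[set j | P j (sel j) == S]| = demand m S.

Definition extend j i := if i == sel j then om |: P j i else P j i.

Lemma mult_extend_in (T : {set 'I_n}) : om \in T -> mult extend T = demand m (T :\ om).
Proof.
move=> omT; rewrite -sel_demand -(card_graph_set sel [pred j | P j (sel j) == T :\ om]).
apply: eq_card => -[j i]; rewrite !inE /extend /=.
case: (eqVneq i (sel j)) => [->|_] /=.
  apply/eqP/eqP => [<-|->]; first by rewrite setU1K ?om_notin_part.
  by rewrite setD1K.
by apply: contraNF (om_notin_part j i) => /eqP ->.
Qed.

Lemma mult_extend_notin (T : {set 'I_n}) :
  om \notin T -> mult P T = mult extend T + demand m T.
Proof.
move=> omT; rewrite -sel_demand -(card_graph_set sel [pred j | P j (sel j) == T]).
rewrite /mult -(cardsID [set p : 'I_M * 'I_s | p.2 == sel p.1]) addnC.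
congr (_ + _); apply: eq_card => -[j i]; rewrite !inE /extend /=.
  case: (eqVneq i (sel j)) => //= _; apply/esym/negbTE.
  by apply: contraNneq omT => <-; rewrite setU11.
by case: (eqVneq i (sel j)) => [->|]; rewrite ?andbF ?andbT.
Qed.

Lemma baranyai_inv_extend : baranyai_inv m.+1 extend.
Proof.
have [disP rowP multP] := IP; split=> [j i i' ii'|j|T].
- rewrite /extend; case: ifP => [/eqP ei|_]; case: ifP => [/eqP ei'|_].
  + by rewrite ei ei' eqxx in ii'.
  + by rewrite disjoint_setU1 om_notin_part disP.
  + by rewrite disjoint_sym disjoint_setU1 om_notin_part disjoint_sym disP.
  + exact: disP.
- rewrite (bigD1 (sel j)) //= /extend eqxx cardsU1 om_notin_part.
  rewrite (eq_bigr (fun i => #|P j i|)) => [|i /negbTE -> //].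
  by move: (rowP j); rewrite (bigD1 (sel j)) //= => <-.
case: (boolP (om \in T)) => omT.
  by rewrite mult_extend_in // (target_succ_in omT).
apply/eqP; rewrite -(eqn_add2r (demand m T)) -mult_extend_notin //.
by rewrite multP (target_succ_notin omT).
Qed.

End Extend.

Lemma baranyai_step : exists P', baranyai_inv m.+1 P'.
Proof.
have [g [gE gle]] := capacitated_hall set0 hall_cond_demand.
(* the capacities add up to M, the number of rows, so each one is met exactly *)
have g_demand S : #|[set j | g j == S]| = demand m S.
  have fib_sum : \sum_S #|[set j in [set: 'I_M] | g j == S]| = M.
    have fib := sum_by_fibers xpredT g (fun _ => 1).
    rewrite sum_nat_const card_ord muln1 in fib; rewrite [RHS]fib.
    by apply: eq_bigr => T _; rewrite muln1; apply: eq_card => j; rewrite !inE.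
  have := (leqif_sum (fun S (_ : true) => leqif_eq (gle S))).2.
  rewrite fib_sum sum_demand eqxx => /esym/forallP/(_ S)/eqP <-.
  by apply: eq_card => j; rewrite !inE.
have /fin_all_exists[sel selP] : forall j, exists i, P j i = g j.
  by move=> j; have /existsP[i /eqP Pji] := gE j (in_setT j); exists i.
exists (extend sel); apply: baranyai_inv_extend => S.
by rewrite -g_demand; apply: eq_card => j; rewrite !inE selP.
Qed.

End Step.

Lemma baranyai_inv_exists : n = s * k -> M * s = 'C(n, k) ->
  forall m, m <= n -> exists P, baranyai_inv m P.
Proof.
move=> n_eq Ms; elim=> [_|m IH lemn].
  by exists (fun _ _ => set0); apply: baranyai_inv0.
by have [P IP] := IH (ltnW lemn); apply: baranyai_step n_eq lemn IP.
Qed.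

Theorem baranyai : n = s * k -> M * s = 'C(n, k) ->
  exists P : 'I_M -> 'I_s -> {set 'I_n},
    [/\ forall j i i', i != i' -> [disjoint P j i & P j i'],
        forall j x, exists i, x \in P j i,
        forall j i, #|P j i| = k
      & forall S : {set 'I_n}, #|S| = k -> mult P S = 1].
Proof.
move=> n_eq Ms; have [P IP] := baranyai_inv_exists n_eq Ms (leqnn n).
have [disP rowP multP] := IP; exists P; split=> //.
- by move=> j; apply: disjoint_family_cover (disP j) _; rewrite rowP card_ord.
- by move=> j i; have [_] := baranyai_inv_part IP j i; rewrite subnn; lia.
move=> S cS; rewrite multP /target cS leqnn andbT !subnn bin0.
by rewrite (_ : S \subset below n) //; apply/subsetP => x _; rewrite inE ltn_ord.
Qed.

End Baranyai.

Section Cliques.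
Variables (T : finType) (e : rel T).

Definition has_clique t :=
  exists r : 'I_t -> T, injective r /\ forall i j, i != j -> e (r i) (r j).

Lemma has_clique_leq t u : u <= t -> has_clique t -> has_clique u.
Proof.
move=> ut [r [rinj radj]]; exists (r \o widen_ord ut); split.
  by move=> i j /rinj /(congr1 val) ij; apply: val_inj.
move=> i j ij; apply: radj; apply: contra ij => /eqP/(congr1 val) ij'.
by apply/eqP/val_inj.
Qed.

Lemma chi_le c : colorable e c -> chi e <= c.
Proof. by rewrite /chi; case: ex_minnP => c0 _; apply. Qed.

Lemma has_clique_odd_Kminor t : has_clique t -> odd_Kminor e t.
Proof.
move=> [r [rinj radj]]; exists set0, (fun i => [set r i]); split; [|split].
- by move=> i j ij; rewrite disjoints1 inE (inj_eq rinj).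
- move=> i; split; first by apply/set0Pn; exists (r i); rewrite inE.
  by move=> u v /set1P -> /set1P ->; apply: connect0.
- by move=> i j ij; exists (r i), (r j); rewrite !inE !eqxx radj.
Qed.

Lemma has_clique_strongly_1shallow_Kminor t :
  has_clique t -> strongly_1shallow_Kminor e t.
Proof.
move=> [r [rinj radj]]; exists r, (fun _ => set0); split; [|split].
- by move=> i; split=> [|l]; rewrite inE.
- by move=> i j ij; rewrite /bag_vertices !setU0 disjoints1 inE (inj_eq rinj).
- by move=> i j ij; exists (r i), (r j); rewrite /bag_attach eqxx !inE !eqxx radj.
Qed.

Lemma odd_Kminor_le_card t : odd_Kminor e t -> t <= #|T|.
Proof.
case=> X [B [disB [connB _]]].
have /fin_all_exists[f fB] : forall i, exists x, x \in B i.
  by move=> i; case: (connB i) => /set0Pn.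
suff /leq_card : injective f by rewrite card_ord.
move=> i j fij; apply/eqP; apply: contraT => ij.
by have /pred0P/(_ (f i)) := disB i j ij; rewrite /= fB fij fB.
Qed.

Lemma odd_hadwiger_ge t : odd_Kminor e t -> exists h, is_odd_hadwiger e h /\ t <= h.
Proof.
move=> oKt; have [h [oKh maxh]] := ex_max_bounded oKt (@odd_Kminor_le_card).
by exists h; split=> //; apply: maxh.
Qed.

End Cliques.

Section Resolution.
Variables (n k M s : nat) (P : 'I_M -> 'I_s -> {set 'I_n}).
Hypotheses (disP : forall j i i', i != i' -> [disjoint P j i & P j i'])
           (coverP : forall j x, exists i, x \in P j i)
           (sizeP : forall j i, #|P j i| = k)
           (multP : forall S : {set 'I_n}, #|S| = k -> mult P S = 1).

Definition part j i : kset n k := exist _ (P j i) (introT eqP (sizeP j i)).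

Lemma part_surj (A : kset n k) : exists p : 'I_M * 'I_s, part p.1 p.2 = A.
Proof.
have /card_gt0P[[j i]] : 0 < mult P (val A) by rewrite multP ?(eqP (valP A)).
by rewrite inE => /eqP PA; exists (j, i); apply: val_inj.
Qed.

Lemma part_inj j i j' i' : P j i = P j' i' -> j = j' /\ i = i'.
Proof.
move=> PP; have /eqP/cards1P[q qP] := multP (sizeP j i).
have : (j, i) \in [set q] by rewrite -qP inE.
have : (j', i') \in [set q] by rewrite -qP inE PP.
by move=> /set1P <- /set1P [-> ->].
Qed.

Lemma resolution_colorable : colorable (Kbar n k) M.
Proof.
have /fin_all_exists[rep repP] := part_surj.
apply/existsP; exists [ffun A => (rep A).1].
apply/forallP => A; apply/forallP => B; apply/implyP => /andP[AB /andP[_ AB0]].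
rewrite !ffunE; move: (repP A) (repP B) AB AB0.
case: (rep A) => j i; case: (rep B) => j' i' /= <- <- AB AB0.
apply: contra AB0 => /eqP jj'; subst j'; rewrite /= setI_eq0 disP //.
by apply: contra AB => /eqP ->.
Qed.

Lemma resolution_has_clique : 0 < n -> has_clique (Kbar n k) M.
Proof.
move=> n_gt0; pose x0 : 'I_n := Ordinal n_gt0.
have /fin_all_exists[f fP] := fun j => coverP j x0.
exists (fun j => part j (f j)); split.
  by move=> j j' /(congr1 val)/part_inj[].
move=> j j' jj'; apply/andP; split.
  by apply: contra jj' => /eqP/part_inj[->].
by apply/set0Pn; exists x0; rewrite inE !fP.
Qed.

End Resolution.

Lemma bin_pred_mul s k : 0 < k -> 'C((s * k).-1, k.-1) * s = 'C(s * k, k).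
Proof.
move=> k_gt0; have := mul_bin_diag (s * k) k.-1; rewrite prednK // => diag.
by apply/eqP; rewrite -(eqn_pmul2l k_gt0) -diag; apply/eqP; lia.
Qed.

Theorem lemma2p2 (s k : nat) : 2 <= s -> 2 <= k ->
  (exists h, is_odd_hadwiger (Kbar (s * k) k) h /\ chi (Kbar (s * k) k) <= h) /\
  strongly_1shallow_Kminor (Kbar (s * k) k) (chi (Kbar (s * k) k)).
Proof.
move=> s2 k2.
have [P [disP coverP sizeP multP]] :=
  baranyai (erefl (s * k)) (bin_pred_mul s (ltnW k2)).
have clique : has_clique (Kbar (s * k) k) (chi (Kbar (s * k) k)).
  apply: has_clique_leq (chi_le (resolution_colorable disP sizeP multP)) _.
  by apply: resolution_has_clique coverP sizeP multP _; rewrite muln_gt0; lia.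
split; last exact: has_clique_strongly_1shallow_Kminor.
by have [h [hadw le_chi_h]] := odd_hadwiger_ge (has_clique_odd_Kminor clique); exists h.
Qed.
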